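(* Let $n\ge 2$, $N=2n^2$, and let $\hat{\mathbf A}$, $\hat{\mathbf D}$ and $\mathbf Q=\begin{pmatrix}\hat{\mathbf A} & \mathbf 0\\ \mathbf I_N-\hat{\mathbf A} & \hat{\mathbf D}\end{pmatrix}$ be as in the context. For an $N\times N$ matrix $\mathbf T$ and $\epsilon>0$ put $$\mathbf G=\begin{pmatrix}\mathbf 0_{N\times N} & \mathbf T\\ \mathbf 0_{N\times N} & -\mathbf T\end{pmatrix},\qquad \mathbf Q_{\epsilon,\mathbf T}=\mathbf Q+\epsilon\mathbf G .$$ If $\mathbf T=\mathbf I_N-\hat{\mathbf D}$ (or $\mathbf T=\mathbf I_N-\hat{\mathbf D}^{-1}$), then $\mathbf Q_{\epsilon,\mathbf T}$ has exactly three linearly independent right eigenvectors for the eigenvalue $1$, and these are exactly the right eigenvectors of $\mathbf Q$ for the eigenvalue $1$, namely $\begin{pmatrix}\mathbf 1_N\\ \mathbf 0_N\end{pmatrix}$, $\begin{pmatrix}\mathbf 0_N\\ \bar{\mathbf v}^+\end{pmatrix}$, $\begin{pmatrix}\mathbf 0_N\\ \bar{\mathbf v}^-\end{pmatrix}$, where $\bar{\mathbf v}^\pm$ span the eigenspace of $\hat{\mathbf D}$ for the eigenvalue $1$.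
   Context: Notation: $n\ge2$, $N=2n^2$. $\hat{\mathbf A}$ is an $N\times N$ row-stochastic SIA matrix (so $1$ is a simple eigenvalue and all others have modulus $<1$). For $l=1,\dots,n$, $\mathbf D^l$ is an $n\times n$ column-stochastic matrix, and $\hat{\mathbf D}$ is the $N\times N$ matrix partitioned into an $n\times n$ array of $2n\times 2n$ blocks whose $(i,l)$ block equals $\frac1n\,\mathrm{diag}(\mathbf D^l,\mathbf D^l)$ for all $i,l$; it is assumed that $\frac1n\sum_l\mathbf D^l$ has $1$ as a simple eigenvalue, so that the eigenvalue $1$ of $\hat{\mathbf D}$ has a two-dimensional eigenspace spanned by two nonnegative vectors $\bar{\mathbf v}^+$ (supported on the coordinates $j$ with $1\le j \bmod 2n\le n$) and $\bar{\mathbf v}^-$ (supported on the coordinates $j$ with $n+1\le j\bmod 2n\le 2n$, where residue $0$ is read as $2n$). $\mathbf 1_N,\mathbf 0_N$ are the all-ones and zero vectors. *)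

From HB Require Import structures.
From mathcomp Require Import all_boot all_order all_algebra.
From mathcomp Require Import all_classical all_reals all_analysis.
Set Implicit Arguments. Unset Strict Implicit. Unset Printing Implicit Defensive.
Import Order.TTheory GRing.Theory Num.Theory.
Import numFieldNormedType.Exports.
Local Open Scope classical_set_scope.
Local Open Scope ring_scope.

(* Conventions: indices are 0-based.  A coordinate p : 'I_N (N = 2n^2)
   corresponds to the paper's index j = p+1, so "1 <= j mod 2n <= n" reads
   "p %% 2n < n". *)

Definition row_stochastic (R : realType) (m : nat) (A : 'M[R]_m) : Prop :=
  (forall i j, 0 <= A i j) /\ (forall i, \sum_j A i j = 1).

Definition col_stochastic (R : realType) (m : nat) (A : 'M[R]_m) : Prop :=
  (forall i j, 0 <= A i j) /\ (forall j, \sum_i A i j = 1).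

Definition SIA (R : realType) (m : nat) (A : 'M[R]_m) : Prop :=
  row_stochastic A /\
  exists c : 'I_m -> R, forall i j,
    ((fun k : nat => (A ^+ k) i j) : R^nat) @ \oo --> (c j : R).

Definition dval (R : realType) (n : nat) (D : 'I_n -> 'M[R]_n)
    (l r s : nat) : R :=
  match insub l, insub r, insub s with
  | Some l', Some r', Some s' => D l' r' s'
  | _, _, _ => 0
  end.

(* \hat D : n x n array of 2n x 2n blocks, block (i,l) = (1/n) diag(D^l, D^l) *)
Definition Dhat (R : realType) (n : nat) (D : 'I_n -> 'M[R]_n)
    : 'M[R]_(2 * n ^ 2) :=
  \matrix_(p, q)
    let l := (q %/ (2 * n))%N in
    let r := (p %% (2 * n))%N in
    let s := (q %% (2 * n))%N in
    if (r < n)%N && (s < n)%N then n%:R^-1 * dval D l r s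
    else if (n <= r)%N && (n <= s)%N then n%:R^-1 * dval D l (r - n) (s - n)
    else 0.

Definition Dmean (R : realType) (n : nat) (D : 'I_n -> 'M[R]_n) : 'M[R]_n :=
  n%:R^-1 *: \sum_l D l.

Definition simple_eig1 (R : realType) (m : nat) (M : 'M[R]_m) : Prop :=
  root (char_poly M) 1 /\ ~~ ((('X - 1%:P) ^+ 2) %| char_poly M).

Definition Qmat (R : realType) (N : nat) (A D : 'M[R]_N) : 'M[R]_(N + N) :=
  block_mx A 0 (1%:M - A) D.

Definition Gmat (R : realType) (N : nat) (T : 'M[R]_N) : 'M[R]_(N + N) :=
  block_mx 0 T 0 (- T).

Definition Qeps (R : realType) (N : nat) (A D T : 'M[R]_N) (eps : R)
  : 'M[R]_(N + N) := Qmat A D + eps *: Gmat T.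

(* Write Dh for \hat D and vectors of R^(2N) as (x; y).  The second block row
   of G is the opposite of the first, so adding the two block rows of
   Q_{eps,T} w = w gives x + Dh y = x + y: every fixed vector of Q_{eps,T},
   like every fixed vector of Q, satisfies Dh y = y.  Both choices of T vanish
   on such y, hence G w = 0 and the two fixed spaces coincide.  A fixed vector
   of Q has A x = x, so x is constant because the powers of A converge to a
   matrix with identical rows, and Dh y = y, so y lies in span(v+, v-).  For
   the rank, a nonzero fixed vector u of (1/n) sum_l D^l lifts to fixed vectors
   of Dh that repeat u on the coordinates with p mod 2n < n (resp. >= n) and
   vanish elsewhere; writing them in the basis v+, v- shows that v+ and v- are
   each nonzero at a coordinate where the other one vanishes. *)

From HB Require Import structures.
From mathcomp Require Import all_boot all_order all_algebra.
From mathcomp Require Import all_classical all_reals all_analysis.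
From mathcomp Require Import zify.
Import Order.TTheory GRing.Theory Num.Theory.
Import numFieldNormedType.Exports.
Set Implicit Arguments. Unset Strict Implicit. Unset Printing Implicit Defensive.
Local Open Scope classical_set_scope.
Local Open Scope ring_scope.

Lemma root_char_poly1_fixed (F : fieldType) m (M : 'M[F]_m) :
  root (char_poly M) 1 -> exists2 u : 'cV[F]_m, u != 0 & M *m u = u.
Proof.
rewrite -eigenvalue_root_char => /eigenvalueP[v vM v0].
have /det0P[w w0 wM] : \det (1%:M - M)^T == 0.
  by rewrite det_tr; apply/det0P; exists v; rewrite // mulmxBr mulmx1 vM scale1r subrr.
exists w^T; first by rewrite trmx_eq0.
move/(congr1 trmx): wM; rewrite trmx_mul trmxK trmx0 mulmxBl mul1mx.
by move/eqP; rewrite subr_eq0 eq_sym => /eqP.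
Qed.

(* No invertibility needed: for singular M, [invmx M] is M itself. *)
Lemma invmx_fixed (F : fieldType) m (M : 'M[F]_m) (y : 'cV[F]_m) :
  M *m y = y -> invmx M *m y = y.
Proof.
move=> My; have [Mu | /invmx_out-> //] := boolP (M \in unitmx).
by rewrite -{1}My mulmxA mulVmx // mul1mx.
Qed.

Lemma mulmx_1B_fixed (F : fieldType) m (M T : 'M[F]_m) (y : 'cV[F]_m) :
  T = 1%:M - M \/ T = 1%:M - invmx M -> M *m y = y -> T *m y = 0.
Proof.
move=> T_def My; have Miy := invmx_fixed My.
by case: T_def => ->; rewrite mulmxBl mul1mx ?My ?Miy subrr.
Qed.

Lemma rank_row_mx3 (F : fieldType) m (x y z : 'cV[F]_m) :
  (forall a b c : F, a *: x + b *: y + c *: z = 0 -> [/\ a = 0, b = 0 & c = 0]) ->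
  \rank (row_mx (row_mx x y) z) = 3%N.
Proof.
move=> free_xyz; apply/eqP; rewrite -mxrank_tr; apply: inj_row_free => u.
rewrite -[u]hsubmxK -[lsubmx u]hsubmxK !tr_row_mx !mul_row_col.
rewrite [lsubmx (lsubmx u)]mx11_scalar [rsubmx (lsubmx u)]mx11_scalar.
rewrite [rsubmx u]mx11_scalar !mul_scalar_mx.
move/(congr1 trmx); rewrite !linearD !linearZ /= !trmxK trmx0.
by case/free_xyz => -> -> ->; rewrite raddf0 !row_mx0.
Qed.

Lemma row_stochastic_mul_const1 (R : realType) m (A : 'M[R]_m) :
  row_stochastic A -> A *m const_mx 1 = const_mx 1 :> 'cV_m.
Proof.
case=> _ sumA1; apply/colP => i; rewrite !mxE.
by under eq_bigr do rewrite mxE mulr1; apply: sumA1.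
Qed.

Lemma SIA_fixed_const (R : realType) m (A : 'M[R]_m) (x : 'cV[R]_m) :
  SIA A -> A *m x = x -> exists a : R, x = a *: const_mx 1.
Proof.
case=> _ [c cvgA] Ax; exists (\sum_j c j * x j 0); apply/colP => i.
have Akx k : A ^+ k *m x = x.
  by elim: k => [|k IHk]; rewrite ?expr0 ?mul1mx // exprSr -mulmxA Ax.
have : (fun k : nat => (A ^+ k *m x) i 0) @ \oo --> \sum_j c j * x j 0.
  under eq_fun do rewrite mxE.
  apply: cvg_big => [|j _]; first exact: add_continuous.
  by apply: cvgMl; apply: cvgA.
under eq_fun do rewrite Akx.
move/(cvg_unique (@Rhausdorff R) (cvg_cst _)) ->.
by rewrite !mxE mulr1.
Qed.

Lemma sum_mod_blocks (V : nmodType) n (H : nat -> nat -> V) :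
  \sum_(q < 2 * n ^ 2) H (q %/ (2 * n))%N (q %% (2 * n))%N =
  \sum_(l < n) (\sum_(s < n) H l s + \sum_(s < n) H l (n + s)%N).
Proof.
have -> : (2 * n ^ 2 = n * (2 * n))%N by lia.
rewrite -(big_mkord xpredT (fun q => H (q %/ (2 * n))%N (q %% (2 * n))%N)).
rewrite big_nat_mul big_mkord.
apply: eq_bigr => l _.
rewrite -{1}[(l * (2 * n))%N]add0n big_addn mulSn addnK.
rewrite (@big_cat_nat _ _ _ n) //=; last by lia.
rewrite [X in _ + X](big_addn 0 (2 * n) n) (_ : 2 * n - n = n)%N; last by lia.
have blk s : (s < 2 * n)%N ->
    H ((s + l * (2 * n)) %/ (2 * n))%N ((s + l * (2 * n)) %% (2 * n))%N = H l s.
  move=> lt_s; have n_gt0 : (0 < 2 * n)%N by lia.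
  by rewrite addnC divnMDl // modnMDl divn_small // modn_small // addn0.
rewrite !big_mkord; congr (_ + _); apply: eq_bigr => s _.
  by rewrite blk //; have := ltn_ord s; lia.
by rewrite [(n + s)%N]addnC blk //; have := ltn_ord s; lia.
Qed.

Definition ncoord (R : ringType) m (u : 'cV[R]_m) (r : nat) : R :=
  if insub r is Some i then u i 0 else 0.

Lemma ncoordE (R : ringType) m (u : 'cV[R]_m) (i : 'I_m) : ncoord u i = u i 0.
Proof. by rewrite /ncoord valK. Qed.

Lemma ncoord_out (R : ringType) m (u : 'cV[R]_m) r : (m <= r)%N -> ncoord u r = 0.
Proof. by move=> le_mr; rewrite /ncoord insubN // -leqNgt. Qed.

Section DhatLifts.
Variables (R : realType) (n : nat) (D : 'I_n -> 'M[R]_n).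

Definition periodic_col (g : nat -> R) : 'cV[R]_(2 * n ^ 2) :=
  \col_p g (p %% (2 * n))%N.

Definition lift_plus (u : 'cV[R]_n) := periodic_col (ncoord u).

Definition lift_minus (u : 'cV[R]_n) :=
  periodic_col (fun r => if (n <= r)%N then ncoord u (r - n) else 0).

Lemma mulmx_Dhat_periodic g (p : 'I_(2 * n ^ 2)) :
  let r := (p %% (2 * n))%N in
  (Dhat D *m periodic_col g) p 0 =
  if (r < n)%N then \sum_(l < n) \sum_(s < n) n%:R^-1 * dval D l r s * g s
  else \sum_(l < n) \sum_(s < n) n%:R^-1 * dval D l (r - n) s * g (n + s)%N.
Proof.
move=> r; rewrite mxE; under eq_bigr do rewrite !mxE.
rewrite (sum_mod_blocks n (fun l s : nat =>
  (if (r < n)%N && (s < n)%N then n%:R^-1 * dval D l r s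
   else if (n <= r)%N && (n <= s)%N then n%:R^-1 * dval D l (r - n) (s - n)
   else 0) * g s)).
case: ltnP => _; apply: eq_bigr => l _.
  rewrite [X in _ + X]big1 ?addr0 => [|s _]; last by rewrite ltnNge leq_addr mul0r.
  by apply: eq_bigr => s _; rewrite ltn_ord.
rewrite big1 ?add0r => [|s _]; last by rewrite [(n <= s)%N]leqNgt ltn_ord mul0r.
by apply: eq_bigr => s _; rewrite leq_addr addKn.
Qed.

Lemma Dmean_fixed_sum (u : 'cV[R]_n) (r : 'I_n) : Dmean D *m u = u ->
  \sum_(l < n) \sum_(s < n) n%:R^-1 * dval D l r s * ncoord u s = u r 0.
Proof.
move=> fix_u; rewrite -{2}fix_u mxE exchange_big /=.
apply: eq_bigr => s _; rewrite /Dmean !mxE summxE mulr_sumr mulr_suml ncoordE.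
by apply: eq_bigr => l _; rewrite /dval !valK.
Qed.

Lemma Dhat_lift_plus u : Dmean D *m u = u -> Dhat D *m lift_plus u = lift_plus u.
Proof.
move=> fix_u; apply/colP => p; rewrite mulmx_Dhat_periodic mxE.
case: ltnP => [lt_rn | le_nr]; first by rewrite (Dmean_fixed_sum (Ordinal lt_rn)) // -ncoordE.
rewrite ncoord_out // big1 // => l _; rewrite big1 // => s _.
by rewrite ncoord_out ?leq_addr // mulr0.
Qed.

Lemma Dhat_lift_minus u : Dmean D *m u = u -> Dhat D *m lift_minus u = lift_minus u.
Proof.
move=> fix_u; apply/colP => p; rewrite mulmx_Dhat_periodic mxE.
case: ltnP => [lt_rn | le_nr].
  rewrite big1 // => l _; rewrite big1 // => s _.
  by rewrite [(n <= s)%N]leqNgt ltn_ord mulr0.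
have lt_rn : (p %% (2 * n) - n < n)%N by have := ltn_ord p; lia.
under eq_bigr do under eq_bigr do rewrite leq_addr addKn.
by rewrite (Dmean_fixed_sum (Ordinal lt_rn)) // -ncoordE.
Qed.

Lemma fixed_basis_separating_coords (vp vm : 'cV[R]_(2 * n ^ 2)) :
  (forall p : 'I_(2 * n ^ 2), (n <= p %% (2 * n))%N -> vp p 0 = 0) ->
  (forall p : 'I_(2 * n ^ 2), (p %% (2 * n) < n)%N -> vm p 0 = 0) ->
  (forall y, Dhat D *m y = y -> exists a b : R, y = a *: vp + b *: vm) ->
  root (char_poly (Dmean D)) 1 ->
  exists p0 p1 : 'I_(2 * n ^ 2),
    [/\ vp p0 0 != 0, vm p0 0 = 0, vm p1 0 != 0 & vp p1 0 = 0].
Proof.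
move=> vp_supp vm_supp span_fixed /root_char_poly1_fixed[u /matrix0Pn[k [j uk0]] fix_u].
rewrite (ord1 j) {j} in uk0.
have lt_k : (k < 2 * n ^ 2)%N by have := ltn_ord k; nia.
have lt_nk : (n + k < 2 * n ^ 2)%N by have := ltn_ord k; nia.
pose p0 := Ordinal lt_k; pose p1 := Ordinal lt_nk.
have r0 : (p0 %% (2 * n) = k)%N by rewrite /= modn_small //; have := ltn_ord k; lia.
have r1 : (p1 %% (2 * n) = n + k)%N by rewrite /= modn_small //; have := ltn_ord k; lia.
have vm0 : vm p0 0 = 0 by apply: vm_supp; rewrite r0.
have vp1 : vp p1 0 = 0 by apply: vp_supp; rewrite r1 leq_addr.
exists p0, p1; split => //.
  have [a [b /colP/(_ p0)]] := span_fixed _ (Dhat_lift_plus fix_u).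
  rewrite !mxE r0 ncoordE vm0 mulr0 addr0 => uk.
  by apply: contra uk0 => /eqP vp0; rewrite uk vp0 mulr0.
have [a [b /colP/(_ p1)]] := span_fixed _ (Dhat_lift_minus fix_u).
rewrite !mxE r1 leq_addr addKn ncoordE vp1 mulr0 add0r => uk.
by apply: contra uk0 => /eqP vm1; rewrite uk vm1 mulr0.
Qed.

End DhatLifts.


Section QFixedPoints.
Variables (R : realType) (N : nat) (A Dh : 'M[R]_N).
Implicit Types (x y : 'cV[R]_N) (w : 'cV[R]_(N + N)).

Lemma Qmat_mul_col_mx x y :
  Qmat A Dh *m col_mx x y = col_mx (A *m x) (x - A *m x + Dh *m y).
Proof. by rewrite mul_block_col mul0mx addr0 mulmxBl mul1mx. Qed.

Lemma Qeps_mul_col_mx T eps x y :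
  Qeps A Dh T eps *m col_mx x y =
  Qmat A Dh *m col_mx x y + eps *: col_mx (T *m y) (- (T *m y)).
Proof. by rewrite mulmxDl -scalemxAl [Gmat T *m _]mul_block_col !mul0mx !add0r mulNmx. Qed.

Lemma Qmat_fixedP x y :
  Qmat A Dh *m col_mx x y = col_mx x y <-> A *m x = x /\ Dh *m y = y.
Proof.
by rewrite Qmat_mul_col_mx; split => [/eq_col_mx[->] | [-> ->]]; rewrite subrr add0r.
Qed.

Lemma Qeps_fixed_Dh T eps x y :
  Qeps A Dh T eps *m col_mx x y = col_mx x y -> Dh *m y = y.
Proof.
rewrite Qeps_mul_col_mx Qmat_mul_col_mx scale_col_mx add_col_mx.
case/eq_col_mx => top; rewrite -{1}top (addrC (A *m x)) addrK scalerN.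
by rewrite addrAC subrr add0r.
Qed.

Lemma Qeps_fixedP T eps :
  (forall y, Dh *m y = y -> T *m y = 0) ->
  forall w, Qeps A Dh T eps *m w = w <-> Qmat A Dh *m w = w.
Proof.
move=> T_fixed w; rewrite -[w]vsubmxK.
have Qeps_Qmat x y : Dh *m y = y ->
    Qeps A Dh T eps *m col_mx x y = Qmat A Dh *m col_mx x y.
  by move/T_fixed => Ty0; rewrite Qeps_mul_col_mx Ty0 oppr0 col_mx0 scaler0 addr0.
split => [fix_w | /[dup] fix_w /Qmat_fixedP[_ fix_y]]; last by rewrite Qeps_Qmat.
by rewrite -Qeps_Qmat // (Qeps_fixed_Dh fix_w).
Qed.

Lemma Qmat_fixed_span (vp vm : 'cV[R]_N) :
  SIA A -> (forall y, Dh *m y = y <-> exists a b : R, y = a *: vp + b *: vm) ->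
  forall w, Qmat A Dh *m w = w <-> exists a b c : R,
    w = a *: col_mx (const_mx 1) 0 + b *: col_mx 0 vp + c *: col_mx 0 vm.
Proof.
move=> A_SIA span_fixed w.
have combE a b c : a *: col_mx (const_mx 1) 0 + b *: col_mx 0 vp + c *: col_mx 0 vm =
    col_mx (a *: const_mx 1) (b *: vp + c *: vm) :> 'cV_(N + N).
  by rewrite !scale_col_mx !add_col_mx !scaler0 !addr0 add0r.
rewrite -[w]vsubmxK Qmat_fixedP; split.
  case=> /(SIA_fixed_const A_SIA)[a ->] /span_fixed[b [c ->]].
  by exists a, b, c; rewrite combE.
case=> a [b [c]]; rewrite combE => /eq_col_mx[-> ->]; split.
  by rewrite -scalemxAr row_stochastic_mul_const1 //; case: A_SIA.
by apply/span_fixed; exists b, c.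
Qed.

Lemma Qfixed_basis_free (vp vm : 'cV[R]_N) (p0 p1 : 'I_N) :
  vp p0 0 != 0 -> vm p0 0 = 0 -> vm p1 0 != 0 -> vp p1 0 = 0 ->
  forall a b c : R,
  a *: col_mx (const_mx 1) 0 + b *: col_mx 0 vp + c *: col_mx 0 vm = 0 :> 'cV_(N + N) ->
  [/\ a = 0, b = 0 & c = 0].
Proof.
move=> vp0 vm0 vm1 vp1 a b c.
rewrite !scale_col_mx !add_col_mx !scaler0 !addr0 add0r -col_mx0.
case/eq_col_mx => /colP/(_ p0) + /colP bot; rewrite !mxE mulr1 => ->.
move: (bot p0) (bot p1); rewrite !mxE vm0 vp1 !mulr0 addr0 add0r => /eqP + /eqP.
by rewrite !mulf_eq0 (negPf vp0) (negPf vm1) !orbF => /eqP -> /eqP ->.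
Qed.

End QFixedPoints.

Theorem lemma2 (R : realType) (n : nat) (hn : (2 <= n)%N)
  (A : 'M[R]_(2 * n ^ 2)) (hA : SIA A)
  (D : 'I_n -> 'M[R]_n) (hD : forall l, col_stochastic (D l))
  (hDm : simple_eig1 (Dmean D))
  (vp vm : 'cV[R]_(2 * n ^ 2))
  (hvp0 : forall p, 0 <= vp p 0) (hvm0 : forall p, 0 <= vm p 0)
  (hvpsupp : forall p : 'I_(2 * n ^ 2), (n <= p %% (2 * n))%N -> vp p 0 = 0)
  (hvmsupp : forall p : 'I_(2 * n ^ 2), (p %% (2 * n) < n)%N -> vm p 0 = 0)
  (hspan : forall y : 'cV[R]_(2 * n ^ 2),
      Dhat D *m y = y <-> exists a b : R, y = a *: vp + b *: vm)
  (T : 'M[R]_(2 * n ^ 2))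
  (hT : T = 1%:M - Dhat D \/ T = 1%:M - invmx (Dhat D))
  (eps : R) (heps : 0 < eps) :
  let e1 : 'cV[R]_(2 * n ^ 2 + 2 * n ^ 2) := col_mx (const_mx 1) 0 in
  let e2 : 'cV[R]_(2 * n ^ 2 + 2 * n ^ 2) := col_mx 0 vp in
  let e3 : 'cV[R]_(2 * n ^ 2 + 2 * n ^ 2) := col_mx 0 vm in
  (forall w : 'cV[R]_(2 * n ^ 2 + 2 * n ^ 2), Qeps A (Dhat D) T eps *m w = w <-> Qmat A (Dhat D) *m w = w) /\
  (forall w : 'cV[R]_(2 * n ^ 2 + 2 * n ^ 2), Qmat A (Dhat D) *m w = w <->
      exists a b c : R, w = a *: e1 + b *: e2 + c *: e3) /\
  \rank (row_mx (row_mx e1 e2) e3) = 3%N.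
Proof.
move=> e1 e2 e3; split; last split.
- by apply: Qeps_fixedP => y; apply: mulmx_1B_fixed.
- exact: Qmat_fixed_span.
have [p0 [p1 [vp0 vm0 vm1 vp1]]] :=
  fixed_basis_separating_coords hvpsupp hvmsupp (fun y => (hspan y).1) hDm.1.
exact/rank_row_mx3/(Qfixed_basis_free vp0 vm0 vm1 vp1).
Qed.
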